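(* Let $L$ be any infinite context-free language over an alphabet $\Sigma$ with $|\Sigma|\geq 2$. Then there is a positive integer $m$ satisfying the following. Let $n\geq 2$ be an integer, let $S\subseteq L\cap\Sigma^n$, and let $j_0,k\in\{2,\ldots,n\}$ be indices such that $k\geq 2j_0$ and $|S_{i,u}|<|S|/\big(m(k-j_0+1)(n-j_0+1)\big)$ for every index $i\in\{1,\ldots,n-j_0\}$ and every string $u\in\Sigma^{j_0}$. Then there exist indices $i\in\{1,\ldots,n\}$ and $j\in\{j_0,\ldots,k\}$ with $i+j\leq n$, and two strings $x=x_1x_2x_3$ and $y=y_1y_2y_3$ in $S$ with $|x_1|=|y_1|=i$, $|x_2|=|y_2|=j$ and $|x_3|=|y_3|$, such that (i) $x_2\neq y_2$, (ii) $x_1y_2x_3\in L$, and (iii) $y_1x_2y_3\in L$.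
   Context: $\Sigma^n$ denotes the set of strings of length exactly $n$ over $\Sigma$. For a string $x$ of length $n$ and indices $0\leq i\leq j\leq n$, $\mathrm{midd}_{i,j}(x)$ is the string obtained from $x$ by deleting its first $i$ symbols and its last $n-j$ symbols (so it has length $j-i$). For a fixed $S\subseteq\Sigma^n$, an index $i$ and a string $u\in\Sigma^{j}$ with $i+j\leq n$, $S_{i,u}=\{x\in S\mid u=\mathrm{midd}_{i,i+j}(x)\}$. *)

From mathcomp Require Import all_boot all_order all_algebra.
Set Implicit Arguments. Unset Strict Implicit. Unset Printing Implicit Defensive.

Section CFG.
Variable Sigma : finType.

Definition sym (N : finType) := (N + Sigma)%type.

Definition cfg_step (N : finType) (R : seq (N * seq (sym N)))
  (u v : seq (sym N)) : Prop :=
  exists (a b : seq (sym N)) (A : N) (rhs : seq (sym N)),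
    (A, rhs) \in R /\ u = a ++ inl A :: b /\ v = a ++ rhs ++ b.

Inductive cfg_derives (N : finType) (R : seq (N * seq (sym N)))
  : seq (sym N) -> seq (sym N) -> Prop :=
| cfg_refl u : cfg_derives R u u
| cfg_trans u v w : cfg_step R u v -> cfg_derives R v w -> cfg_derives R u w.

Definition context_free (L : seq Sigma -> Prop) : Prop :=
  exists (N : finType) (S0 : N) (R : seq (N * seq (sym N))),
    forall w : seq Sigma, L w <-> cfg_derives R [:: inl S0] (map inr w).

Definition infinite_lang (L : seq Sigma -> Prop) : Prop :=
  ~ exists s : seq (seq Sigma), forall w, L w -> w \in s.

Definition midd (i j : nat) (x : seq Sigma) : seq Sigma := drop i (take j x).

Definition Siu (n : nat) (S : {set n.-tuple Sigma}) (i : nat) (u : seq Sigma)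
  : {set n.-tuple Sigma} :=
  [set x in S | u == midd i (i + size u) x].
End CFG.

From mathcomp Require Import all_boot all_order all_algebra zify.
From Stdlib Require Import ClassicalEpsilon.

(* Call a factor x[i, i+j) of a word x of L, with i >= 1 and j0 <= j <= k, a swap site if it
   is generated by a factor [al] of the right-hand side of some rule and every word generated
   by [al] can replace it within L (at the right end of x, the replaceable part may instead be
   the prefix x[0, i)). Every word of L of length n has a swap site: descend the parse tree,
   entering subtrees of yield >= k and otherwise collecting consecutive siblings until their
   yield reaches j0, which keeps it below 2 j0 <= k. A site is determined, up to the word, by
   at most 2 |rhs factors| (n - j0 + 1) (k - j0 + 1) data, so by pigeonhole some such datum is
   shared by a set F of words of S with |S| <= m (k - j0 + 1) (n - j0 + 1) |F|, where
   m = 2 |rhs factors| + 1. If two words of F differ on the site, exchanging their sites gives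
   the conclusion; otherwise F lies in a single S_{i,u} with |u| = j0, against the hypothesis. *)

Set Implicit Arguments. Unset Strict Implicit. Unset Printing Implicit Defensive.
Import GRing.Theory Num.Theory.

Section ParseTrees.
Variables (Sigma N : finType) (R : seq (N * seq (sym Sigma N))).
Local Notation symb := (sym Sigma N).

Inductive gen : symb -> seq Sigma -> Prop :=
| gen_terminal a : gen (inr a) [:: a]
| gen_node A (ch : seq (symb * seq Sigma)) : (A, map fst ch) \in R ->
    (forall p, p \in ch -> gen p.1 p.2) -> gen (inl A) (flatten (map snd ch)).

Definition gens (al : seq symb) (w : seq Sigma) : Prop :=
  exists ch : seq (symb * seq Sigma), [/\ map fst ch = al,
    flatten (map snd ch) = w & forall p, p \in ch -> gen p.1 p.2].

Lemma gens_nil : gens [::] [::].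
Proof. by exists [::]. Qed.

Lemma gens_cat a b wa wb : gens a wa -> gens b wb -> gens (a ++ b) (wa ++ wb).
Proof.
case=> c1 [<- <- h1] [c2 [<- <- h2]]; exists (c1 ++ c2).
by rewrite !map_cat flatten_cat; split=> // p; rewrite mem_cat => /orP[/h1|/h2].
Qed.

Lemma gens_catP a b w : gens (a ++ b) w ->
  exists wa wb, [/\ w = wa ++ wb, gens a wa & gens b wb].
Proof.
case=> ch [hfst <- hgen].
have size_a : size a <= size ch by rewrite -(size_map fst) hfst size_cat leq_addr.
exists (flatten (map snd (take (size a) ch))), (flatten (map snd (drop (size a) ch))).
split; first by rewrite -flatten_cat -map_cat cat_take_drop.
- exists (take (size a) ch); split=> [||p /mem_take/hgen] //.
  by rewrite map_take hfst take_size_cat.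
- exists (drop (size a) ch); split=> [||p /mem_drop/hgen] //.
  by rewrite map_drop hfst drop_size_cat.
Qed.

Lemma gens1 s w : gen s w -> gens [:: s] w.
Proof. by exists [:: (s, w)]; rewrite /= cats0; split=> // p; rewrite inE => /eqP ->. Qed.

Lemma gens1P s w : gens [:: s] w -> gen s w.
Proof.
case=> [[|[s' w'] [|? ?]]] [] //= [<-]; rewrite cats0 => <- h.
by apply: (h (s', w')); rewrite inE.
Qed.

Lemma gens_terminals w : gens (map inr w) w.
Proof. by elim: w => [|a w IH]; [exact: gens_nil | exact: gens_cat (gens1 (gen_terminal a)) IH]. Qed.

Lemma gen_rule A al w : (A, al) \in R -> gens al w -> gen (inl A) w.
Proof. by move=> hR [ch [hfst <- hgen]]; apply: gen_node; rewrite // hfst. Qed.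

Lemma cfg_step_gens u v w : cfg_step R u v -> gens v w -> gens u w.
Proof.
case=> a [b [A [al [hR [-> ->]]]]] /gens_catP [wa [w' [-> ha /gens_catP [wal [wb [-> hal hb]]]]]].
exact: gens_cat ha (gens_cat (gens1 (gen_rule hR hal)) hb).
Qed.

Lemma cfg_derives_gens u v w : cfg_derives R u v -> gens v w -> gens u w.
Proof. by elim=> // u1 v1 w1 hs _ IH /IH; apply: cfg_step_gens hs. Qed.

Lemma cfg_derives_trans u v w :
  cfg_derives R u v -> cfg_derives R v w -> cfg_derives R u w.
Proof. by elim=> // u1 v1 w1 hs _ IH /IH; apply: cfg_trans hs. Qed.

Lemma cfg_derives_ctx a b u v :
  cfg_derives R u v -> cfg_derives R (a ++ u ++ b) (a ++ v ++ b).
Proof.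
elim=> [u1|u1 v1 w1 [a' [b' [A [al [hR [-> ->]]]]]] _ IH]; first exact: cfg_refl.
apply: cfg_trans IH; exists (a ++ a'), (b' ++ b), A, al.
by rewrite -!catA.
Qed.

Lemma cfg_derives_cat u u' v v' : cfg_derives R u u' -> cfg_derives R v v' ->
  cfg_derives R (u ++ v) (u' ++ v').
Proof.
move=> hu hv; apply: (@cfg_derives_trans _ (u' ++ v)).
  exact: cfg_derives_ctx [::] v _ _ hu.
by have := cfg_derives_ctx u' [::] hv; rewrite !cats0.
Qed.

Lemma gen_cfg_derives s w : gen s w -> cfg_derives R [:: s] (map inr w).
Proof.
elim=> [a|A ch hR _ IH]; first exact: cfg_refl.
apply: (@cfg_trans _ _ _ _ (map fst ch)).
  by exists [::], [::], A, (map fst ch); rewrite cats0.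
elim: ch {hR} IH => [|p ch IHch] IH; first exact: cfg_refl.
rewrite /= map_cat -cat1s; apply: cfg_derives_cat; first by apply: IH; rewrite inE eqxx.
by apply: IHch => q hq; apply: IH; rewrite inE hq orbT.
Qed.

Lemma cfg_derivesP s w : cfg_derives R [:: s] (map inr w) <-> gen s w.
Proof.
split=> [h|]; last exact: gen_cfg_derives.
exact/gens1P/(cfg_derives_gens h)/gens_terminals.
Qed.

End ParseTrees.

Lemma exists_large_fiber (T C : finType) (S : {set T}) (Q : C -> pred T) :
  (forall x, x \in S -> exists c, Q c x) -> 0 < #|S| ->
  exists c, #|S| <= #|C| * #|[set x in S | Q c x]|.
Proof.
move=> cover S_gt0; pose F c := #|[set x in S | Q c x]|.
have C_gt0 : 0 < #|C|.
  by case/card_gt0P: S_gt0 => x /cover [c _]; apply/card_gt0P; exists c.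
have [c Fc_max] := eq_bigmax F C_gt0.
exists c; rewrite -/(F c) -Fc_max; apply: (@leq_trans (\sum_c F c)).
  rewrite -sum1_card (@leq_trans (\sum_(x in S) \sum_c (Q c x : nat))) //.
    by apply: leq_sum => x /cover [c' hc']; rewrite (bigD1 c') //= hc'.
  rewrite exchange_big; apply: leq_sum => c' _.
  rewrite /F -sum1_card big_mkcond [X in _ <= X]big_mkcond /=.
  by apply: leq_sum => x _; rewrite inE; case: (x \in S); case: (Q c' x).
by rewrite -sum_nat_const; apply: leq_sum => c' _; exact: leq_bigmax.
Qed.

Lemma exists_large_class (T C : finType) (S : {set T}) (P : C -> T -> Prop) :
  (forall x, x \in S -> exists c, P c x) -> 0 < #|S| ->
  exists c (F : {set T}),
    [/\ F \subset S, forall x, x \in F -> P c x & #|S| <= #|C| * #|F|].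
Proof.
pose Q c x : bool := if excluded_middle_informative (P c x) then true else false.
have QP c x : Q c x <-> P c x by rewrite /Q; case: excluded_middle_informative.
move=> cover S_gt0.
have [c hc] : exists c, #|S| <= #|C| * #|[set x in S | Q c x]|.
  by apply: exists_large_fiber S_gt0 => x /cover [c /QP]; exists c.
exists c, [set x in S | Q c x]; split=> //.
  by apply/subsetP => x; rewrite inE => /andP[].
by move=> x; rewrite inE => /andP[_ /QP].
Qed.

Lemma cat_take_midd_drop (T : finType) (x : seq T) i j :
  take i x ++ midd i (i + j) x ++ drop (i + j) x = x.
Proof.
by rewrite /midd -{1}(take_takel _ (leq_addr j i)) catA !cat_take_drop.
Qed.

Lemma size_midd (T : finType) (x : seq T) i j :
  i + j <= size x -> size (midd i (i + j) x) = j.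
Proof. by move=> h; rewrite /midd size_drop size_takel // addKn. Qed.

Lemma take_midd (T : finType) (x : seq T) i j j' : j' <= j ->
  take j' (midd i (i + j) x) = midd i (i + j') x.
Proof. by move=> h; rewrite /midd take_drop take_takel addnC // leq_add2l. Qed.

Lemma split_first_nonempty (A : Type) (B : eqType) (ch : seq (A * seq B)) :
  flatten (map snd ch) != [::] ->
  exists e p post, [/\ ch = e ++ p :: post, flatten (map snd e) = [::] & p.2 != [::]].
Proof.
elim: ch => [|p ch IH] //=; case: (eqVneq p.2 [::]) => [hp|hp _]; last by exists [::], p, ch.
rewrite hp /= => /IH [e [q [post [-> he hq]]]].
by exists (p :: e), q, post; rewrite /= hp he.
Qed.

Lemma Siu_of_common_middle (Sigma : finType) n (S F : {set n.-tuple Sigma})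
    i j j' (x0 : n.-tuple Sigma) :
  j' <= j -> i + j <= n -> F \subset S ->
  (forall x, x \in F -> midd i (i + j) x = midd i (i + j) x0) ->
  F \subset Siu S i (midd i (i + j') x0).
Proof.
move=> hj' hij FS same; apply/subsetP => x xF.
have hsz : size (midd i (i + j') x0) = j'.
  by rewrite size_midd // size_tuple (leq_trans _ hij) // leq_add2l.
by rewrite inE (subsetP FS x xF) hsz -(take_midd x0 i hj') -(take_midd x i hj') (same x xF) eqxx.
Qed.

Lemma ltr_nat_div (a b d : nat) : 0 < d -> ((a%:R : rat) < b%:R / d%:R)%R = (a * d < b).
Proof. by move=> hd; rewrite ltr_pdivlMr ?ltr0n // -natrM ltr_nat. Qed.

Section SwapSites.
Variables (Sigma N : finType) (R : seq (N * seq (sym Sigma N))) (L : seq Sigma -> Prop).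
Local Notation symb := (sym Sigma N).
Local Notation gen := (gen R).
Local Notation gens := (gens R).

Definition rhs_factors : seq (seq symb) :=
  flatten [seq [seq take q (drop p r.2) | p <- iota 0 (size r.2).+1,
                                          q <- iota 0 (size r.2).+1] | r <- R].

Lemma mem_rhs_factors A al p q : (A, al) \in R -> take q (drop p al) \in rhs_factors.
Proof.
move=> hR; apply/flattenP; exists
  [seq take q (drop p al) | p <- iota 0 (size al).+1, q <- iota 0 (size al).+1].
  by apply/mapP; exists (A, al).
have -> : take q (drop p al) = take (minn q (size al)) (drop (minn p (size al)) al).
  have -> : drop p al = drop (minn p (size al)) al.
    by case: (leqP p (size al)) => // /ltnW h; rewrite !drop_oversize.
  case: (leqP q (size al)) => // /ltnW h.
  by rewrite !take_oversize // size_drop (leq_trans (leq_subr _ _)).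
by apply: (allpairs_f (fun p q => take q (drop p al))); rewrite mem_iota ltnS geq_minr.
Qed.

Definition ctxL (al : seq symb) (c1 c3 : seq Sigma) : Prop :=
  forall v, gens al v -> L (c1 ++ v ++ c3).

Lemma ctxL_catl a b w c1 c3 : ctxL (a ++ b) c1 c3 -> gens a w -> ctxL b (c1 ++ w) c3.
Proof. by move=> h hw v hv; have := h _ (gens_cat hw hv); rewrite -!catA. Qed.

Lemma ctxL_catr a b w c1 c3 : ctxL (a ++ b) c1 c3 -> gens b w -> ctxL a c1 (w ++ c3).
Proof. by move=> h hw v hv; have := h _ (gens_cat hv hw); rewrite -!catA. Qed.

Lemma ctxL_rule A al c1 c3 : (A, al) \in R -> ctxL [:: inl A] c1 c3 -> ctxL al c1 c3.
Proof. by move=> hR h v /(gen_rule hR)/gens1/h. Qed.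

Section Sites.
Variables (n j0 k : nat).
Hypotheses (j0_gt0 : 0 < j0) (k_ge : 2 * j0 <= k) (k_le : k <= n).

(* With [b], the factor [x[i, i+j)] is generated by [al] and may be replaced by any word
   [al] generates; without [b], it is the prefix [x[0, i)] that is replaceable, and the
   factor [x[i, i+j)] is the whole remaining suffix. *)
Definition swap_site (b : bool) (al : seq symb) (i j : nat) (x : seq Sigma) : Prop :=
  [/\ al \in rhs_factors, 0 < i, j0 <= j <= k, i + j <= n &
   if b then gens al (midd i (i + j) x) /\ ctxL al (take i x) (drop (i + j) x)
   else [/\ i + j = n, gens al (take i x) & ctxL al [::] (drop i x)]].

Definition has_swap_site (x : seq Sigma) := exists b al i j, swap_site b al i j x.

Lemma has_swap_site_middle al c1 w c3 : 0 < size c1 -> j0 <= size w <= k ->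
  size (c1 ++ w ++ c3) = n -> al \in rhs_factors -> gens al w -> ctxL al c1 c3 ->
  has_swap_site (c1 ++ w ++ c3).
Proof.
move=> c1_gt0 hw hsz hal hgen hctx; exists true, al, (size c1), (size w).
have hmidd : midd (size c1) (size c1 + size w) (c1 ++ w ++ c3) = w.
  by rewrite /midd catA -size_cat take_size_cat // drop_size_cat.
have hdrop : drop (size c1 + size w) (c1 ++ w ++ c3) = c3.
  by rewrite catA -size_cat drop_size_cat.
rewrite /swap_site hmidd hdrop take_size_cat //; split=> //.
by rewrite -hsz !size_cat addnA leq_addr.
Qed.

Lemma has_swap_site_prefix al w c3 : 0 < size w -> j0 <= size c3 <= k ->
  size (w ++ c3) = n -> al \in rhs_factors -> gens al w -> ctxL al [::] c3 ->
  has_swap_site (w ++ c3).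
Proof.
move=> w_gt0 hc3 hsz hal hgen hctx; exists false, al, (size w), (size c3).
by rewrite /swap_site take_size_cat // drop_size_cat // -size_cat hsz.
Qed.

Definition site_below (s : symb) (w : seq Sigma) : Prop :=
  k <= size w -> forall c1 c3, 0 < size c1 -> size (c1 ++ w ++ c3) = n ->
  ctxL [:: s] c1 c3 -> has_swap_site (c1 ++ w ++ c3).

(* Scan the siblings left to right: a sibling of yield >= k is entered, one of yield in
   [j0, k) is itself the factor, one of yield < j0 joins the left context as long as the
   remaining siblings still yield >= j0; otherwise all siblings together yield < 2 j0. *)
Lemma site_of_siblings (ch : seq (symb * seq Sigma)) c1 c3 :
  0 < size c1 -> size (c1 ++ flatten (map snd ch) ++ c3) = n ->
  (forall p q, take q (drop p (map fst ch)) \in rhs_factors) ->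
  (forall p, p \in ch -> gen p.1 p.2) -> (forall p, p \in ch -> site_below p.1 p.2) ->
  ctxL (map fst ch) c1 c3 -> j0 <= size (flatten (map snd ch)) ->
  has_swap_site (c1 ++ flatten (map snd ch) ++ c3).
Proof.
elim: ch c1 => [|p ch IH] c1 c1_gt0 hsz hfac hgen hbelow hctx hj.
  by move: hj; rewrite leqNgt j0_gt0.
rewrite /= in hsz hj hctx *; set rest := flatten (map snd ch) in hsz hj *.
have hp : p \in p :: ch by rewrite inE eqxx.
have hch q : q \in ch -> q \in p :: ch by rewrite inE => ->; rewrite orbT.
have hrest : gens (map fst ch) rest.
  by exists ch; split=> // q /hch; apply: hgen.
have hctxp : ctxL [:: p.1] c1 (rest ++ c3) by apply: ctxL_catr hrest.
rewrite -catA; case: (leqP k (size p.2)) => [hk|hk].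
  by apply: (hbelow p hp hk) => //; rewrite -hsz -catA.
case: (leqP j0 (size p.2)) => [hj0|hj0].
  apply: has_swap_site_middle hctxp => //; first by rewrite hj0 ltnW.
  - by rewrite -hsz -catA.
  - by move: (hfac 0 1); rewrite drop0 /= take0.
  - exact: gens1 (hgen _ hp).
case: (leqP j0 (size rest)) => [hr|hr].
  rewrite catA; apply: IH => //; first by rewrite size_cat ltn_addr.
  - by rewrite -hsz !size_cat !addnA.
  - by move=> a b; apply: (hfac a.+1 b).
  - by move=> q /hch; apply: hgen.
  - by move=> q /hch; apply: hbelow.
  - by apply: ctxL_catl (gens1 (hgen _ hp)).
rewrite [p.2 ++ _]catA; apply: has_swap_site_middle hctx => //.
- by rewrite hj /= size_cat; lia.
- by have := hfac 0 (size (p.1 :: map fst ch)); rewrite drop0 take_size.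
- by apply: gens_cat (gens1 (hgen _ hp)) hrest.
Qed.

Lemma site_of_subtree s w : gen s w -> site_below s w.
Proof.
elim=> [a|A ch hR hgen IH] hkw c1 c3 c1_gt0 hsz hctx; first by move: hkw => /=; lia.
apply: site_of_siblings => //.
- by move=> p q; apply: mem_rhs_factors hR.
- exact: ctxL_rule hR hctx.
- by apply: leq_trans hkw; lia.
Qed.

(* Along the leftmost nonempty branch the left context is empty; the right context grows
   until it reaches length j0, and at that moment either the right siblings yield >= j0
   (with the branch as nonempty left context) or the prefix case applies. *)
Lemma site_of_spine s w c3 : gen s w -> size (w ++ c3) = n -> size c3 < j0 ->
  ctxL [:: s] [::] c3 -> has_swap_site (w ++ c3).
Proof.
have j0_lt : j0 < n by lia.
move=> hsw; elim: hsw c3 => [a|A ch hR hgen IH] c3 hsz hc3 hctx.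
  by move: hsz; rewrite size_cat /=; lia.
have hne : flatten (map snd ch) != [::].
  by apply/eqP => hnil; move: hsz; rewrite hnil /=; lia.
have [e [p [post [hch he hp]]]] := split_first_nonempty hne.
have hmem q : q \in e ++ p :: post -> gen q.1 q.2 by rewrite -hch; apply: hgen.
have hpin : p \in ch by rewrite hch mem_cat inE eqxx orbT.
have hpg : gen p.1 p.2 := hgen p hpin.
have he' : gens (map fst e) [::].
  by exists e; split=> // q hq; apply: hmem; rewrite mem_cat hq.
set rest := flatten (map snd post).
have hpost : gens (map fst post) rest.
  by exists post; split=> // q hq; apply: hmem; rewrite mem_cat inE hq !orbT.
have hfl : flatten (map snd ch) = p.2 ++ rest by rewrite hch map_cat flatten_cat he.
have hctx' : ctxL (map fst e ++ p.1 :: map fst post) [::] c3.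
  by rewrite -map_cons -map_cat -hch; apply: ctxL_rule hR hctx.
have hctxp : ctxL (p.1 :: map fst post) [::] c3 := ctxL_catl hctx' he'.
rewrite hfl in hsz *; rewrite -catA.
case: (leqP j0 (size rest)) => [hr|hr].
  apply: site_of_siblings => //; first by rewrite lt0n size_eq0.
  - by rewrite catA.
  - move=> a b; have := mem_rhs_factors (a + (size e).+1) b hR.
    by rewrite hch map_cat -drop_drop -cat_rcons drop_size_cat // size_rcons size_map.
  - by move=> q hq; apply: hmem; rewrite mem_cat inE hq !orbT.
  - by move=> q hq; apply/site_of_subtree/hmem; rewrite mem_cat inE hq !orbT.
  - by apply: (ctxL_catl (a := [:: p.1])) hctxp (gens1 hpg).
case: (leqP j0 (size (rest ++ c3))) => [hrc|hrc].
  apply: (@has_swap_site_prefix (map fst e ++ [:: p.1])) => //.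
  - by rewrite lt0n size_eq0.
  - rewrite hrc size_cat (leq_trans _ k_ge) // mul2n -addnn.
    exact: leq_add (ltnW hr) (ltnW hc3).
  - by rewrite catA.
  - have := mem_rhs_factors 0 (size e).+1 hR.
    by rewrite drop0 hch map_cat /= -cat_rcons take_size_cat ?size_rcons ?size_map // cats1.
  - exact: gens_cat he' (gens1 hpg).
  - by apply: ctxL_catr hpost; rewrite -catA.
apply: (IH p hpin) => //.
- by rewrite catA.
- exact: (ctxL_catr (a := [:: p.1]) hctxp hpost).
Qed.

Lemma exists_swap_site s x : gen s x -> size x = n ->
  (forall v, gen s v -> L v) -> has_swap_site x.
Proof.
move=> hx hsz hL; rewrite -[x]cats0; apply: (site_of_spine hx); rewrite ?cats0 //.
by move=> v /gens1P /hL; rewrite cats0.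
Qed.

Lemma swap_site_swap b al i j x y : size x = n -> size y = n ->
  swap_site b al i j x -> swap_site b al i j y ->
  L (take i x ++ midd i (i + j) y ++ drop (i + j) x).
Proof.
move=> hx hy [_ _ _ _ sx] [_ _ _ _ sy].
case: b sx sy => [[_ hctx] [hgen _]|[hn hgen _] [_ _ hctx]]; first exact: hctx hgen.
rewrite hn [drop n x]drop_oversize ?hx // cats0 /midd [take n y]take_oversize ?hy //.
exact: hctx hgen.
Qed.

Definition site_class
    (c : bool * 'I_(size rhs_factors) * 'I_(n - j0).+1 * 'I_(k - j0).+1) (x : seq Sigma) :=
  swap_site c.1.1.1 (nth [::] rhs_factors c.1.1.2) c.1.2 (c.2 + j0) x.

Lemma exists_site_class s x : gen s x -> size x = n ->
  (forall v, gen s v -> L v) -> exists c, site_class c x.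
Proof.
move=> hx hsz hL; have [b [al [i [j site]]]] := exists_swap_site hx hsz hL.
have [hal i_gt0 /andP[j_ge j_le] hij _] := site.
have al_idx : index al rhs_factors < size rhs_factors by rewrite index_mem.
have i_lt : i < (n - j0).+1 by lia.
have j_lt : j - j0 < (k - j0).+1 by lia.
exists (b, Ordinal al_idx, Ordinal i_lt, Ordinal j_lt).
by rewrite /site_class /= nth_index // subnK.
Qed.

Definition exchangeable_middles (S : {set n.-tuple Sigma}) : Prop :=
  exists (i j : nat) (x y : n.-tuple Sigma) (x1 x2 x3 y1 y2 y3 : seq Sigma),
    [/\ 1 <= i <= n, j0 <= j <= k, i + j <= n, x \in S & y \in S] /\
    [/\ val x = x1 ++ x2 ++ x3, val y = y1 ++ y2 ++ y3,
        size x1 = i /\ size y1 = i, size x2 = j /\ size y2 = j & size x3 = size y3] /\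
    [/\ x2 != y2, L (x1 ++ y2 ++ x3) & L (y1 ++ x2 ++ y3)].

Lemma swap_middles (S : {set n.-tuple Sigma}) b al i j (x y : n.-tuple Sigma) :
  x \in S -> y \in S -> swap_site b al i j x -> swap_site b al i j y ->
  midd i (i + j) x != midd i (i + j) y -> exchangeable_middles S.
Proof.
move=> xS yS sx sy hne; have [_ i_gt0 hj hij _] := sx.
have hx := size_tuple x; have hy := size_tuple y.
have hi : i <= n := leq_trans (leq_addr j i) hij.
exists i, j, x, y, (take i x), (midd i (i + j) x), (drop (i + j) x),
  (take i y), (midd i (i + j) y), (drop (i + j) y).
split; [|split].
- by split=> //; rewrite i_gt0 hi.
- split; rewrite ?cat_take_midd_drop //.
  + by rewrite !size_takel ?hx ?hy.
  + by rewrite !size_midd ?hx ?hy.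
  + by rewrite !size_drop hx hy.
- split=> //; [exact: swap_site_swap hx hy sx sy | exact: swap_site_swap hy hx sy sx].
Qed.

Lemma exchangeable_or_concentrated (S : {set n.-tuple Sigma}) s :
  (forall x, x \in S -> gen s x) -> (forall v, gen s v -> L v) -> 0 < #|S| ->
  exchangeable_middles S \/
  exists i u, [/\ 0 < i <= n - j0, size u = j0 &
    #|S| <= 2 * size rhs_factors * (n - j0).+1 * (k - j0).+1 * #|Siu S i u|].
Proof.
move=> hgen hL S_gt0.
have cover (x : n.-tuple Sigma) : x \in S -> exists c, site_class c x.
  by move=> xS; apply: exists_site_class (hgen x xS) (size_tuple x) hL.
have [[[[b f] i] dj] [F [FS Fsite S_le]]] := exists_large_class cover S_gt0.
rewrite /site_class /= in Fsite.
have /card_gt0P [x0 x0F] : 0 < #|F|.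
  by rewrite lt0n; apply: contraTneq S_le => ->; rewrite muln0 leqn0 -lt0n.
have [_ i_gt0 /andP[j_ge _] hij _] := Fsite x0 x0F.
case: (boolP [exists y in F, midd i (i + (dj + j0)) y != midd i (i + (dj + j0)) x0]).
  case/exists_inP => y yF hne; left.
  exact: swap_middles (subsetP FS _ yF) (subsetP FS _ x0F) (Fsite _ yF) (Fsite _ x0F) hne.
move=> /exists_inPn same; right; exists i, (midd i (i + j0) x0); split.
- by apply/andP; split=> //; lia.
- by rewrite size_midd // size_tuple; lia.
- have FSiu := Siu_of_common_middle j_ge hij FS (fun x xF => eqP (negPn (same x xF))).
  by rewrite (leq_trans S_le) // !card_prod card_bool !card_ord leq_mul2l (subset_leq_card FSiu) orbT.
Qed.

End Sites.
End SwapSites.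

Unset Implicit Arguments.
Local Open Scope ring_scope.

Theorem lemma4p1 (Sigma : finType) (L : seq Sigma -> Prop) :
  (2 <= #|Sigma|)%N -> context_free L -> infinite_lang L ->
  exists m : nat, (0 < m)%N /\
  forall (n : nat) (S : {set n.-tuple Sigma}) (j0 k : nat),
    (2 <= n)%N ->
    (forall x : n.-tuple Sigma, x \in S -> L (val x)) ->
    (2 <= j0 <= n)%N -> (2 <= k <= n)%N -> (2 * j0 <= k)%N ->
    (forall (i : nat) (u : seq Sigma), (1 <= i <= n - j0)%N -> size u = j0 ->
       (#|Siu S i u|%:R : rat) <
       #|S|%:R / (m * (k - j0 + 1) * (n - j0 + 1))%N%:R) ->
    exists (i j : nat) (x y : n.-tuple Sigma)
           (x1 x2 x3 y1 y2 y3 : seq Sigma),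
      [/\ (1 <= i <= n)%N, (j0 <= j <= k)%N, (i + j <= n)%N,
          x \in S & y \in S] /\
      [/\ val x = x1 ++ x2 ++ x3, val y = y1 ++ y2 ++ y3,
          size x1 = i /\ size y1 = i, size x2 = j /\ size y2 = j
        & size x3 = size y3] /\
      [/\ x2 != y2, L (x1 ++ y2 ++ x3) & L (y1 ++ x2 ++ y3)].
Proof.
move=> hSig [N [S0 [R hL]]] _.
exists (2 * size (rhs_factors R)).+1; split=> // n S j0 k _ hSL.
move=> /andP[j0_ge2 _] /andP[_ k_le] k_ge; set D := (_ * _ * _)%N => hsparse.
have j0_gt0 : (0 < j0)%N by apply: leq_trans j0_ge2.
have {}hsparse i u : (1 <= i <= n - j0)%N -> size u = j0 -> (#|Siu S i u| * D < #|S|)%N.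
  by move=> hi hu; rewrite -ltr_nat_div ?hsparse // /D !muln_gt0 !addn1.
have /card_gt0P [a _] : (0 < #|Sigma|)%N by apply: leq_trans hSig.
have S_gt0 : (0 < #|S|)%N.
  by apply: leq_ltn_trans (leq0n _) (hsparse 1%N (nseq j0 a) _ (size_nseq _ _)); lia.
have genS (x : n.-tuple Sigma) : x \in S -> gen R (inl S0) x by move/hSL/hL/cfg_derivesP.
have genL v : gen R (inl S0) v -> L v by move/cfg_derivesP/hL.
have [//|[i [u [hi hu S_le]]]] := exchangeable_or_concentrated j0_gt0 k_ge k_le genS genL S_gt0.
have hC : (2 * size (rhs_factors R) * (n - j0).+1 * (k - j0).+1 <= D)%N.
  by rewrite /D !addn1 mulnAC leq_mul2r leq_mul2r leqnSn !orbT.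
by have := hsparse i u hi hu; rewrite ltnNge mulnC (leq_trans S_le) // leq_mul2r hC orbT.
Qed.
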